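(* For any finite graph $G$ and integer $k\ge0$: $\alpha(G)=k$ if and only if $G$ has an extended independent set of order $k$ but no extended independent set of any order larger than $k$.
   Context: Let $G$ be a graph. An extended independent set of order $k$ in $G$ is a set $K$ of $k+r$ vertices, for some integer $0\le r\le k$, such that: (1) the induced subgraph $G[K]$ has no cycles, has exactly $2r$ non-isolated vertices, and the subgraph of $G[K]$ induced on these $2r$ vertices has a perfect matching; and (2) for every vertex $v\notin K$, the set $\mathcal N(v)\cap K$ (where $\mathcal N(v)$ is the neighbourhood of $v$) contains at least two isolated vertices of $G[K]$, or contains at least two vertices of the same connected component of $G[K]$. $\alpha(G)$ is the independence number of $G$. *)

(* A finite simple graph is a symmetric irreflexive
   relation e on a finType T. *)
From mathcomp Require Import all_boot.
Set Implicit Arguments. Unset Strict Implicit. Unset Printing Implicit Defensive.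

Section Graph.
Variables (T : finType) (e : rel T).

Definition independent (S : {set T}) : bool :=
  [forall x in S, forall y in S, ~~ e x y].

Definition alpha : nat := \max_(S : {set T} | independent S) #|S|.

Definition induced_rel (K : {set T}) : rel T :=
  [rel x y | [&& x \in K, y \in K & e x y]].

Definition acyclic_in (K : {set T}) : Prop :=
  forall c : seq T, uniq c -> 2 < size c -> {subset c <= K} ->
    ~~ cycle (induced_rel K) c.

Definition nonisolated (K : {set T}) : {set T} :=
  [set x in K | [exists y in K, e x y]].
Definition isolated (K : {set T}) : {set T} := K :\: nonisolated K.

Definition has_perfect_matching (N : {set T}) : Prop :=
  exists M : {set {set T}}, partition M N /\
    forall B, B \in M -> exists x y, [/\ B = [set x; y], x != y & e x y].

Definition nbhd (v : T) : {set T} := [set u | e v u].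

Definition ext_indep (k : nat) (K : {set T}) : Prop :=
  exists r : nat, [/\ r <= k, #|K| = k + r,
    acyclic_in K,
    #|nonisolated K| = 2 * r &
    has_perfect_matching (nonisolated K)] /\
    forall v, v \notin K ->
      (exists u w, [/\ u != w, u \in nbhd v :&: isolated K &
                         w \in nbhd v :&: isolated K])
      \/
      (exists u w, [/\ u != w, u \in nbhd v :&: K, w \in nbhd v :&: K &
                         connect (induced_rel K) u w]).

End Graph.

(* If K is an extended independent set of order k with 2r non-isolated
   vertices, its k - r isolated vertices together with an independent half of
   the forest induced on the other 2r vertices form an independent set of size
   at least k, so k <= alpha.  Conversely, start from a maximum independent set
   (r = 0) and, while some vertex v outside K violates the domination
   condition, add it to K: v closes no cycle, and it has exactly one isolated
   neighbour u in K, since with none the same counting would produce an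
   independent set of size alpha + 1; so {u, v} is a new matching edge and
   |K| = alpha + r is preserved.  The process stops with an extended
   independent set of order alpha. *)

From mathcomp Require Import all_boot zify.
From Stdlib Require Import Classical.
Set Implicit Arguments. Unset Strict Implicit. Unset Printing Implicit Defensive.

Section Forests.
Variables (T : finType) (e : rel T).
Hypotheses (esym : symmetric e) (eirr : irreflexive e).

Lemma acyclic_in_subset (N N' : {set T}) :
  N' \subset N -> acyclic_in e N -> acyclic_in e N'.
Proof.
move=> sN'N acN c uc szc cN'; apply/negP => cyc.
have /negP[] := acN c uc szc (fun x xc => subsetP sN'N _ (cN' x xc)).
apply: sub_cycle cyc => x y /and3P[xN' yN' exy].
by rewrite /induced_rel /= (subsetP sN'N _ xN') (subsetP sN'N _ yN').
Qed.

Lemma independent_acyclic_in (S : {set T}) :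
  independent e S -> acyclic_in e S.
Proof.
move=> /forall_inP iS [|x [|y p]] //= _ _ _; apply/negP.
by case/andP=> /and3P[xS yS]; move: (forall_inP (iS x xS) y yS) => /negPf->.
Qed.

Definition simple_path_in (N : {set T}) (x : T) (s : seq T) :=
  [&& uniq (x :: s), all [in N] (x :: s) & path (induced_rel e N) x s].

(* Any other neighbour of the head lying on the path would close a cycle. *)
Lemma simple_path_nbr (N : {set T}) x s w :
  acyclic_in e N -> simple_path_in N x s -> e x w -> w \in x :: s ->
  w = head x s.
Proof.
move=> acN /and3P[us alls ps] exw; rewrite inE.
have /negPf-> : w != x by apply: contraTneq exw => ->; rewrite eirr.
case: s us alls ps => [|a s] // us alls ps /=.
rewrite inE => /orP[/eqP // | ws]; case: (eqVneq w a) => // wa.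
case/splitPr: ws us alls ps => p1 p2; rewrite -cat_rcons => us alls ps.
set c := x :: a :: rcons p1 w.
have cN : {subset c <= N}.
  by move=> t ht; apply: (allP alls); rewrite -2!cat_cons mem_cat ht.
have /negP[] : ~~ cycle (induced_rel e N) c.
  apply: acN cN; first by move: us; rewrite -2!cat_cons cat_uniq => /andP[].
  by rewrite /= size_rcons.
rewrite /c /cycle rcons_path; apply/andP; split.
  by move: ps; rewrite -cat_cons cat_path => /andP[].
rewrite /= last_rcons /induced_rel /= esym exw !cN //.
all: by rewrite !inE ?mem_rcons inE eqxx ?orbT.
Qed.

Lemma simple_path_size (N : {set T}) x s :
  simple_path_in N x s -> size s < #|T|.
Proof. by case/and3P=> /card_uniqP /= <- _ _; apply: max_card. Qed.

(* Extend a simple path at its head until the head is a leaf: a head with two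
   neighbours has one off the path. *)
Lemma acyclic_in_leaf (N : {set T}) x0 :
  acyclic_in e N -> x0 \in N ->
  exists2 x, x \in N & #|[set y in N | e x y]| <= 1.
Proof.
move=> acN x0N.
suff from_path x s : simple_path_in N x s ->
    exists2 y, y \in N & #|[set z in N | e y z]| <= 1.
  by apply: (from_path x0 [::]); rewrite /simple_path_in /= x0N.
have [n] := ubnP (#|T| - size s); elim: n x s => // n IH x s ltn ps.
have xN : x \in N by case/and3P: ps => _ /andP[].
case: (leqP #|[set y in N | e x y]| 1) => [|/card_gt1P[y [z]]]; first by exists x.
rewrite !inE => -[/andP[yN exy] /andP[zN exz] yz].
have [w [wN exw wh]] : exists w, [/\ w \in N, e x w & w != head x s].
  case: (eqVneq y (head x s)) => [yh|]; last by exists y.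
  by exists z; rewrite -yh eq_sym.
have wNs : w \notin x :: s by apply: contra wh => /(simple_path_nbr acN ps exw)->.
apply: (IH w (x :: s)).
  by have := simple_path_size ps; rewrite /= in ltn *; lia.
case/and3P: ps => /= us /andP[_ alls] pths.
by rewrite /simple_path_in /= wNs us wN xN alls /induced_rel /= wN xN esym exw.
Qed.

Lemma independent0 : independent e set0.
Proof. by apply/forall_inP => x; rewrite inE. Qed.

Lemma independentU1 (S : {set T}) x :
  independent e S -> (forall z, z \in S -> ~~ e x z) -> independent e (x |: S).
Proof.
move=> /forall_inP iS xS; apply/forall_inP => y; rewrite in_setU1 => yxS.
apply/forall_inP => z; rewrite in_setU1.
case/orP: yxS => [/eqP-> | yS] /orP[/eqP-> | zS].
- by rewrite eirr.
- exact: xS.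
- by rewrite esym; apply: xS.
- by move/forall_inP: (iS y yS); apply.
Qed.

(* Put a leaf in I and delete it together with its neighbour. *)
Lemma acyclic_in_half_independent (N : {set T}) :
  acyclic_in e N ->
  exists I : {set T}, [/\ I \subset N, independent e I & #|N| <= 2 * #|I|].
Proof.
have [n] := ubnP #|N|; elim: n N => // n IH N ltN acN.
have [-> | [x0 x0N]] := set_0Vmem N.
  by exists set0; rewrite sub0set cards0; split=> //; apply: independent0.
have [x xN le1] := acyclic_in_leaf acN x0N.
set B := x |: nbhd e x; set N' := N :\: B.
have sN'N : N' \subset N := subsetDl N B.
have cardN := cardsID B N; rewrite -/N' in cardN.
have cardNB : 0 < #|N :&: B| <= 2.
  apply/andP; split; first by apply/card_gt0P; exists x; rewrite !inE xN eqxx.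
  apply: leq_trans (_ : #|x |: [set y in N | e x y]| <= 2).
    by apply: subset_leq_card; apply/subsetP => y; rewrite !inE => /andP[->] ->.
  by rewrite cardsU1 (leq_add (leq_b1 _) le1).
have ltN' : #|N'| < n by lia.
have [I [sIN' iI cardI]] := IH N' ltN' (acyclic_in_subset sN'N acN).
have xI : x \notin I by apply/negP => /(subsetP sIN'); rewrite !inE eqxx.
exists (x |: I); split.
- by rewrite subUset sub1set xN (subset_trans sIN' sN'N).
- apply: independentU1 iI _ => z /(subsetP sIN').
  by rewrite !inE negb_or => /andP[/andP[_ ]].
- by rewrite cardsU1 xI; lia.
Qed.
End Forests.

Section ExtendedIndependentSets.
Variables (T : finType) (e : rel T).
Hypotheses (esym : symmetric e) (eirr : irreflexive e).

Lemma independentU (A B : {set T}) :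
  independent e A -> independent e B ->
  (forall x y, x \in A -> y \in B -> ~~ e x y) -> independent e (A :|: B).
Proof.
move=> /forall_inP iA /forall_inP iB AB; apply/forall_inP => x xAB.
apply/forall_inP => y; move: xAB; rewrite !inE.
case/orP=> [xA | xB] /orP[yA | yB].
- by move/forall_inP: (iA x xA); apply.
- exact: AB.
- by rewrite esym; apply: AB.
- by move/forall_inP: (iB x xB); apply.
Qed.

Lemma independent_le_alpha (S : {set T}) : independent e S -> #|S| <= alpha e.
Proof. by move=> iS; rewrite /alpha (bigmax_sup S). Qed.

Lemma alpha_witness : exists2 S : {set T}, independent e S & #|S| = alpha e.
Proof.
have : 0 < #|independent e| by apply/card_gt0P; exists set0; apply: independent0.
by case/(eq_bigmax_cond (fun S : {set T} => #|S|)) => S iS eqS; exists S.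
Qed.

Lemma nonisolated_subset (K : {set T}) : nonisolated e K \subset K.
Proof. by apply/subsetP => x; rewrite inE => /andP[]. Qed.

Lemma card_isolated (K : {set T}) :
  #|isolated e K| + #|nonisolated e K| = #|K|.
Proof.
by rewrite addnC -(cardsID (nonisolated e K) K) (setIidPr (nonisolated_subset K)).
Qed.

Lemma isolated_nbr (K : {set T}) x y :
  x \in isolated e K -> y \in K -> ~~ e x y.
Proof.
rewrite !inE => /andP[+ xK] yK; rewrite xK /=.
by apply: contra => exy; apply/existsP; exists y; rewrite yK.
Qed.

Lemma independent_isolated (K : {set T}) : independent e (isolated e K).
Proof.
apply/forall_inP => x xI; apply/forall_inP => y /setDP[yK _].
exact: isolated_nbr xI yK.
Qed.

Lemma isolatedU_le_alpha (K I : {set T}) :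
  independent e I -> [disjoint isolated e K & I] ->
  (forall x y, x \in isolated e K -> y \in I -> ~~ e x y) ->
  #|isolated e K| + #|I| <= alpha e.
Proof.
move=> iI dKI KI; rewrite -cardsUI (disjoint_setI0 dKI) cards0 addn0.
by apply/independent_le_alpha/independentU => //; apply: independent_isolated.
Qed.

Lemma ext_indep_le_alpha k (K : {set T}) : ext_indep e k K -> k <= alpha e.
Proof.
case=> r [[_ cardK acK cardN _] _].
have [I [sIN iI cardI]] := acyclic_in_half_independent esym eirr
  (acyclic_in_subset (nonisolated_subset K) acK).
have sIK := subset_trans sIN (nonisolated_subset K).
have : #|isolated e K| + #|I| <= alpha e.
  apply: isolatedU_le_alpha iI _ _.
    rewrite disjoint_sym disjoint_subset; apply: subset_trans sIN _.
    by apply/subsetP => x xN; rewrite inE /isolated in_setD xN.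
  by move=> x y xK /(subsetP sIK); apply: isolated_nbr.
by have := card_isolated K; lia.
Qed.

Definition isolated_dominated (K : {set T}) v :=
  exists u w, [/\ u != w, u \in nbhd e v :&: isolated e K &
                   w \in nbhd e v :&: isolated e K].

Definition component_dominated (K : {set T}) v :=
  exists u w, [/\ u != w, u \in nbhd e v :&: K, w \in nbhd e v :&: K &
                   connect (induced_rel e K) u w].

(* A cycle of G[v |: K] through v leaves v to a neighbour a and returns from
   a neighbour b, and the rest of the cycle connects a to b inside K. *)
Lemma acyclic_in_setU1 (K : {set T}) v :
  acyclic_in e K -> v \notin K -> ~ component_dominated K v ->
  acyclic_in e (v |: K).
Proof.
move=> acK vK noB c uc szc cvK; apply/negP => cyc.
have sK : {in K &, subrel (induced_rel e (v |: K)) (induced_rel e K)}.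
  by move=> x y xK yK; rewrite /induced_rel /= xK yK => /and3P[_ _ ->].
have [vc | vNc] := boolP (v \in c); last first.
  have cK : all [in K] c.
    apply/allP => x xc; move: (cvK x xc); rewrite in_setU1.
    by case/orP => // /eqP xv; rewrite -xv xc in vNc.
  by have /negP[] := acK c uc szc (allP cK); rewrite (sub_in_cycle sK cK cyc).
case/rot_to: vc => i p cE.
have uvp : uniq (v :: p) by rewrite -cE rot_uniq.
have cycp : cycle (induced_rel e (v |: K)) (v :: p) by rewrite -cE rot_cycle.
have szp : 2 < size (v :: p) by rewrite -cE size_rot.
have pK : {subset p <= K}.
  move=> x xp; have /cvK : x \in c by rewrite -(mem_rot i) cE inE xp orbT.
  rewrite in_setU1 => /orP[/eqP xv | //].
  by move: uvp; rewrite /= -xv xp.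
case: p {cE} uvp cycp szp pK => [|a q] // uvp cycp szp pK.
case/lastP: q uvp cycp szp pK => [|q b] // uvp cycp szp pK.
apply: noB; exists a, b.
move: cycp; rewrite /cycle rcons_cons /= => /andP[/and3P[_ _ eva]].
rewrite rcons_path last_rcons => /andP[pq /and3P[_ _ ebv]].
have aK : a \in K by apply: pK; rewrite mem_head.
have bK : b \in K by apply: pK; rewrite inE mem_rcons mem_head orbT.
split.
- by apply: contraTneq uvp => ->; rewrite /= mem_rcons mem_head andbF.
- by rewrite in_setI inE eva aK.
- by rewrite in_setI inE esym ebv bK.
- apply/connectP; exists (rcons q b); last by rewrite last_rcons.
  apply: (sub_in_path sK) pq; apply/allP => x.
  by rewrite inE => /orP[/eqP-> // | xq]; apply: pK; rewrite inE xq orbT.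
Qed.

Definition matched_forest k r (K : {set T}) :=
  [/\ #|K| = k + r, acyclic_in e K, #|nonisolated e K| = 2 * r &
      has_perfect_matching e (nonisolated e K)].

Lemma has_perfect_matching0 : has_perfect_matching e set0.
Proof. by exists set0; rewrite partition_set0; split=> // B; rewrite inE. Qed.

Lemma has_perfect_matchingU2 (N : {set T}) u v :
  has_perfect_matching e N -> u \notin N -> v \notin N -> u != v -> e u v ->
  has_perfect_matching e ([set u; v] :|: N).
Proof.
move=> [M [pM edgeM]] uN vN uv euv; exists ([set u; v] |: M); split.
  apply: partitionU1 => //; first by apply/set0Pn; exists u; rewrite !inE eqxx.
  rewrite disjoint_subset; apply/subsetP => x.
  by rewrite !inE => /orP[] /eqP->.
move=> B; rewrite in_setU1 => /orP[/eqP-> | /edgeM //].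
by exists u, v.
Qed.

Lemma nonisolated_setU1 (K : {set T}) u v :
  v \notin K -> u \in nbhd e v :&: isolated e K -> ~ isolated_dominated K v ->
  nonisolated e (v |: K) = [set u; v] :|: nonisolated e K.
Proof.
move=> vK uvK noA; have /setIP[evu uiso] := uvK; rewrite inE in evu.
have uK : u \in K by move: uiso; rewrite /isolated => /setDP[].
apply/setP => x; rewrite !inE; apply/idP/idP.
  case/andP=> /orP[/eqP-> | xK]; first by rewrite eqxx orbT.
  case/existsP=> y /andP[/[!inE] /orP[/eqP-> | yK] exy]; last first.
    by rewrite xK /=; apply/orP; right; apply/existsP; exists y; rewrite yK.
  have [xN | xN] := boolP [exists y in K, e x y]; first by rewrite xK orbT.
  case: (eqVneq x u) => // xu; case: noA; exists u, x; split; rewrite 1?eq_sym //.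
  by rewrite !inE esym exy xK andbT negb_and xN.
case/orP=> [/orP[]/eqP-> | /andP[xK /existsP[y /andP[yK exy]]]].
- by rewrite uK orbT; apply/existsP; exists v; rewrite !inE eqxx esym evu.
- by rewrite eqxx; apply/existsP; exists u; rewrite !inE uK orbT evu.
- by rewrite xK orbT; apply/existsP; exists y; rewrite !inE yK orbT.
Qed.

Lemma matched_forest_isolated_nbr (K : {set T}) r v :
  matched_forest (alpha e) r K -> v \notin K -> acyclic_in e (v |: K) ->
  nbhd e v :&: isolated e K != set0.
Proof.
move=> [cardK _ cardN _] vK acvK; apply/negP => /eqP noiso.
have sNK : nonisolated e K \subset K := nonisolated_subset K.
have [I [sI iI cardI]] := acyclic_in_half_independent esym eirr
  (acyclic_in_subset (setUS [set v] sNK) acvK).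
have : #|isolated e K| + #|I| <= alpha e.
  apply: isolatedU_le_alpha iI (disjointWr sI _) _.
    rewrite disjoint_sym disjoint_subset; apply/subsetP => x.
    rewrite in_setU1 => /orP[/eqP-> | xN]; rewrite !inE.
      by rewrite (negPf vK) andbF.
    by move: xN; rewrite inE => /andP[-> ->].
  move=> x y xiso /(subsetP sI); rewrite in_setU1 => /orP[/eqP-> | yN].
    apply/negP => exv; move: (in_set0 x).
    by rewrite -noiso in_setI xiso andbT inE esym exv.
  exact: isolated_nbr xiso (subsetP sNK y yN).
have vN : v \notin nonisolated e K by apply: contra vK; apply: (subsetP sNK).
move: cardI; rewrite cardsU1 vN cardN; have := card_isolated K.
by rewrite cardK cardN; lia.
Qed.

Lemma matched_forest_extend (K : {set T}) r v :
  matched_forest (alpha e) r K -> v \notin K ->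
  ~ isolated_dominated K v -> ~ component_dominated K v ->
  matched_forest (alpha e) r.+1 (v |: K).
Proof.
move=> mK vK noA noB; have [cardK acK cardN pmN] := mK.
have acvK := acyclic_in_setU1 acK vK noB.
have /set0Pn[u uvK] := matched_forest_isolated_nbr mK vK acvK.
have /setIP[evu /setDP[uK uN]] := uvK; rewrite inE in evu.
have uv : u != v by apply: contraNneq vK => <-.
have vN : v \notin nonisolated e K.
  by apply: contra vK; apply/subsetP/nonisolated_subset.
rewrite /matched_forest (nonisolated_setU1 vK uvK noA); split.
- by rewrite cardsU1 vK cardK addnS.
- exact: acvK.
- by rewrite -setUA cardsU1 cardsU1 in_setU1 negb_or uv uN vN cardN; lia.
- by apply: has_perfect_matchingU2; rewrite // esym.
Qed.

Lemma nonisolated_independent (S : {set T}) :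
  independent e S -> nonisolated e S = set0.
Proof.
move=> /forall_inP iS; apply/setP => x; rewrite !inE; apply/andP => -[xS].
by case/existsP=> y /andP[yS]; apply/negP; move/forall_inP: (iS x xS); apply.
Qed.

Lemma matched_forest_ext_indep r (K : {set T}) :
  matched_forest (alpha e) r K -> exists K', ext_indep e (alpha e) K'.
Proof.
have [n] := ubnP (#|T| - #|K|); elim: n r K => // n IH r K ltn mK.
case: (classic (exists v, v \notin K /\
    ~ (isolated_dominated K v \/ component_dominated K v))) => [|undom].
  case=> v [vK /not_or_and[noA noB]].
  apply: (IH r.+1 (v |: K)); last exact: matched_forest_extend.
  by have := max_card (mem (v |: K)); rewrite cardsU1 vK; lia.
have [cardK acK cardN pmN] := mK; exists K, r; split.
  by split=> //; have := card_isolated K; rewrite cardK cardN; lia.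
by move=> v vK; apply: NNPP => vundom; apply: undom; exists v.
Qed.

Lemma ext_indep_alpha_exists : exists K, ext_indep e (alpha e) K.
Proof.
have [S iS cardS] := alpha_witness; apply: (@matched_forest_ext_indep 0 S).
split; rewrite ?cardS ?addn0 ?nonisolated_independent ?cards0 //.
- exact: independent_acyclic_in.
- exact: has_perfect_matching0.
Qed.

End ExtendedIndependentSets.

Theorem lemma1p1 (T : finType) (e : rel T) (esym : symmetric e)
  (eirr : irreflexive e) (k : nat) :
  alpha e = k <->
  ((exists K : {set T}, ext_indep e k K) /\
   (forall (k' : nat) (K : {set T}), k < k' -> ~ ext_indep e k' K)).
Proof.
split=> [<- | [[K kK] noLarger]].
  split=> [|k' K ltk' /(ext_indep_le_alpha esym eirr)]; last by lia.
  exact: ext_indep_alpha_exists.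
have [K' alphaK'] := ext_indep_alpha_exists esym eirr.
have := ext_indep_le_alpha esym eirr kK.
rewrite leq_eqVlt => /orP[/eqP // | ltk].
by case: (noLarger _ _ ltk alphaK').
Qed.
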